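(* Let $K,n\in\mathbb{N}^*$ and $\mu\in H^3((0,1),\mathbb{R})$ with $\sum_jj^{4n}|c_j|<\infty$ and $A^n_K\neq0$. There exists $T^*>0$ such that for every $T\in(0,T^* )$ and every real $s\in L^2(0,T)$, $-\operatorname{sign}(A^n_K)Q_n(s)\ge\frac{|A^n_K|}4\int_0^Ts(t)^2dt$, where $$Q_n(s)=-A^n_K\int_0^Ts(t)^2\cos[(\lambda_K-\lambda_1)(t-T)]dt+\int_0^Ts(t)\int_0^ts(\tau)k_n(t,\tau)d\tau dt,$$ $$k_n(t,\tau)=(-1)^{n+1}\sum_{j\ge1}(\lambda_K-\lambda_j)^n(\lambda_j-\lambda_1)^nc_j\sin\big(\lambda_K(t-T)+\lambda_j(\tau-t)+\lambda_1(T-\tau)\big).$$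
   Context: $\varphi_j=\sqrt2\sin(j\pi x)$, $\lambda_j=(j\pi)^2$, $\langle f,g\rangle=\int_0^1f\bar g$, $c_j=\langle\mu\varphi_1,\varphi_j\rangle\langle\mu\varphi_K,\varphi_j\rangle$, $A^n_K=(-1)^{n-1}\sum_{j}(\lambda_j-\frac{\lambda_1+\lambda_K}2)(\lambda_K-\lambda_j)^{n-1}(\lambda_j-\lambda_1)^{n-1}c_j$. *)

From HB Require Import structures.
From mathcomp Require Import all_boot all_order all_algebra.
From mathcomp Require Import all_classical all_reals all_analysis.
Set Implicit Arguments. Unset Strict Implicit. Unset Printing Implicit Defensive.
Import Order.TTheory GRing.Theory Num.Theory.
Import numFieldNormedType.Exports.
Local Open Scope classical_set_scope.
Local Open Scope ring_scope.

Section Defs.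
Variable R : realType.
Notation leb := (@lebesgue_measure R).

Definition integ (a b : R) (f : R -> R) : R := Rintegral leb `[a, b] f.

Definition L2_on (a b : R) (s : R -> R) : Prop :=
  measurable_fun `[a, b] s /\
  (\int[leb]_(x in `[a, b]) ((s x) ^+ 2)%:E < +oo)%E.

(** mu in H^3((0,1),R): a.e. on (0,1), mu = quadratic + triple primitive
    of some g in L^2(0,1) (i.e. the weak third derivative of mu is g) *)
Definition H3_01 (mu : R -> R) : Prop :=
  exists (a b c : R) (g : R -> R), L2_on 0 1 g /\
    {ae leb, forall x : R, x \in `]0, 1[ ->
       mu x = a + b * x + c * x ^+ 2
              + integ 0 x (fun t => (x - t) ^+ 2 / 2 * g t)}.

Definition phi (j : nat) (x : R) : R := Num.sqrt 2 * sin (j%:R * pi * x).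

Definition lam (j : nat) : R := (j%:R * pi) ^+ 2.

Definition ip (f g : R -> R) : R := integ 0 1 (fun x => f x * g x).

Definition cc (mu : R -> R) (K j : nat) : R :=
  ip (fun x => mu x * phi 1 x) (phi j) * ip (fun x => mu x * phi K x) (phi j).

Definition rseries (F : nat -> R) : R := limn (fun N => \sum_(1 <= j < N) F j).

Definition AnK (mu : R -> R) (K n : nat) : R :=
  (-1) ^+ n.-1 * rseries (fun j =>
     (lam j - (lam 1 + lam K) / 2) * (lam K - lam j) ^+ n.-1
     * (lam j - lam 1) ^+ n.-1 * cc mu K j).

Definition kn (mu : R -> R) (K n : nat) (T t tau : R) : R :=
  (-1) ^+ n.+1 * rseries (fun j =>
     (lam K - lam j) ^+ n * (lam j - lam 1) ^+ n * cc mu K j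
     * sin (lam K * (t - T) + lam j * (tau - t) + lam 1 * (T - tau))).

Definition Qn (mu : R -> R) (K n : nat) (T : R) (s : R -> R) : R :=
  - AnK mu K n * integ 0 T (fun t => s t ^+ 2 * cos ((lam K - lam 1) * (t - T)))
  + integ 0 T (fun t => s t * integ 0 t (fun tau => s tau * kn mu K n T t tau)).

End Defs.

From HB Require Import structures.
From mathcomp Require Import all_boot all_order all_algebra.
From mathcomp Require Import all_classical all_reals all_analysis.
From mathcomp Require Import lra ring measurable_realfun.
Set Implicit Arguments.
Unset Strict Implicit.
Unset Printing Implicit Defensive.
Import Order.TTheory GRing.Theory Num.Theory.
Import numFieldNormedType.Exports.
Local Open Scope classical_set_scope.
Local Open Scope ring_scope.

(* Both terms of [Qn] are compared with the integral of [s ^+ 2].  Summability of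
   [j ^ (4 n) |c_j|] bounds the kernel uniformly, [|kn| <= M], so by Cauchy-Schwarz the
   double integral is at most [M (int |s|)^2 <= M T int s^2].  For small [T] the weight
   [cos ((lam K - lam 1) (t - T))] stays above [1/2] on [[0, T]], so the first term,
   multiplied by [- sg A], is at least [|A| / 2 int s^2]; choosing also [M T <= |A| / 4]
   leaves [|A| / 4 int s^2]. *)

Section dominated_integral.
Context d (T : measurableType d) (R : realType) (mu : {measure set T -> \bar R}).

Lemma ge0_le_integral_nonmeasurable (D : set T) (f g : T -> \bar R) :
  (forall x, D x -> 0 <= f x)%E -> (forall x, D x -> f x <= g x)%E ->
  (\int[mu]_(x in D) f x <= \int[mu]_(x in D) g x)%E.
Proof.
move=> f0 fg; have g0 x : D x -> (0 <= g x)%E.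
  by move=> Dx; exact: le_trans (f0 _ Dx) (fg _ Dx).
rewrite !ge0_integralE //; apply: ereal_sup_le => _ [h hf <-]; exists h => // x.
apply: le_trans (hf x) _; rewrite /patch; case: ifPn => // /set_mem; exact: fg.
Qed.

(* No measurability of [f] is required: this is what allows bounding the inner
   integral of [s tau * kn mu K n T t tau] in [tau]. *)
Lemma ler_norm_Rintegral_dom (D : set T) (f F : T -> R) : measurable D ->
  mu.-integrable D (EFin \o F) -> (forall x, D x -> `|f x| <= F x) ->
  `|\int[mu]_(x in D) f x| <= \int[mu]_(x in D) F x.
Proof.
move=> mD IF fF; rewrite /Rintegral integralE.
set a := (\int[mu]_(x in D) _ ^\+ x)%E; set b := (\int[mu]_(x in D) _ ^\- x)%E.
set c := (\int[mu]_(x in D) (F x)%:E)%E.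
have cf : c \is a fin_num by exact: integrable_fin_num IF.
have dom (g : T -> \bar R) : (forall x, 0 <= g x)%E ->
    (forall x, D x -> g x <= `|f x|%:E)%E -> (0 <= \int[mu]_(x in D) g x <= c)%E.
  move=> g0 gf; rewrite integral_ge0 //=.
  apply: ge0_le_integral_nonmeasurable => // x Dx.
  by apply: le_trans (gf _ Dx) _; rewrite lee_fin fF.
have /andP[a0 ac] : (0 <= a <= c)%E.
  apply: dom => [x|x _]; first exact: funepos_ge0.
  by rewrite funeposE /= -EFin_max lee_fin ge_max normr_ge0 ler_norm.
have /andP[b0 bc] : (0 <= b <= c)%E.
  apply: dom => [x|x _]; first exact: funeneg_ge0.
  by rewrite funenegE /comp -EFinN -EFin_max lee_fin ge_max normr_ge0 ler_normr lexx orbT.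
have af : a \is a fin_num by rewrite ge0_fin_numE // (le_lt_trans ac) // ltey_eq cf.
have bf : b \is a fin_num by rewrite ge0_fin_numE // (le_lt_trans bc) // ltey_eq cf.
rewrite -(fineK af) -(fineK bf) -(fineK cf) !lee_fin in a0 ac b0 bc *.
rewrite -EFinB /= ler_norml; apply/andP; split; lra.
Qed.

Section finite_measure_set.
Variables (D : set T) (m : R).
Hypotheses (mD : measurable D) (muD : mu D = m%:E).

Lemma integrable_cst_on (k : R) : mu.-integrable D (EFin \o cst k).
Proof.
apply/integrableP; split; first exact/measurable_EFinP.
by rewrite /= (eq_integral (cst `|k|%:E)) // integral_cst // muD -EFinM ltry.
Qed.

Lemma Rintegral_cst_on (k : R) : \int[mu]_(x in D) k = k * m.
Proof. by rewrite Rintegral_cst // muD. Qed.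

Lemma integrableD_real (f g : T -> R) :
  mu.-integrable D (EFin \o f) -> mu.-integrable D (EFin \o g) ->
  mu.-integrable D (EFin \o (f \+ g)).
Proof.
move=> If Ig; apply: eq_integrable mD _ _ _ (integrableD mD If Ig) => x _.
by rewrite /= EFinD.
Qed.

Lemma integrable_norm_of_sqr (f : T -> R) : measurable_fun D f ->
  mu.-integrable D (EFin \o (fun x => f x ^+ 2)) ->
  mu.-integrable D (EFin \o (fun x => `|f x|)).
Proof.
move=> mf If2; apply: (le_integrable mD _ _ (integrableD_real If2 (integrable_cst_on 1))).
- exact/measurable_EFinP/measurableT_comp.
- move=> x _; rewrite /comp !abse_EFin lee_fin normr_id ger0_norm ?addr_ge0 ?sqr_ge0 //=.
  rewrite -[f x ^+ 2]real_normK ?num_real //; have := sqr_ge0 (`|f x| - 1); nra.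
Qed.

Lemma Rintegral_norm_sqr_le (f : T -> R) : 0 < m -> measurable_fun D f ->
  mu.-integrable D (EFin \o (fun x => f x ^+ 2)) ->
  (\int[mu]_(x in D) `|f x|) ^+ 2 <= m * \int[mu]_(x in D) f x ^+ 2.
Proof.
move=> m0 mf If2; have Iabs := integrable_norm_of_sqr mf If2.
set a := \int[mu]_(x in D) `|f x|; set b := \int[mu]_(x in D) f x ^+ 2.
pose c := a / m; have cm : c * m = a by rewrite /c divfK // gt_eqF.
(* AM-GM [2 c |f| <= f^2 + c^2] with [c = a / m], integrated over [D] *)
have : \int[mu]_(x in D) (2 * c * `|f x|) <= \int[mu]_(x in D) (f x ^+ 2 + c ^+ 2).
  apply: le_Rintegral => //.
  - by apply: eq_integrable mD _ _ _ (integrableZl mD (2 * c) Iabs) => x _; rewrite /= EFinM.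
  - exact: integrableD_real If2 (integrable_cst_on _).
  move=> x _; rewrite -[f x ^+ 2]real_normK ?num_real //.
  have := sqr_ge0 (`|f x| - c); nra.
rewrite RintegralZl // RintegralD // ?Rintegral_cst_on; last exact: integrable_cst_on.
rewrite -/a -/b -cm => amgm.
have cmb : c ^+ 2 * m <= b by nra.
rewrite (_ : _ ^+ 2 = m * (c ^+ 2 * m)); last by ring.
by rewrite ler_wpM2l // ltW.
Qed.

Lemma Rintegral_weight_ge (f w : T -> R) (c : R) :
  mu.-integrable D (EFin \o f) -> measurable_fun D w ->
  (forall x, D x -> 0 <= f x) -> (forall x, D x -> c <= w x /\ `|w x| <= 1) ->
  c * \int[mu]_(x in D) f x <= \int[mu]_(x in D) (f x * w x).
Proof.
move=> If mw f0 hw; rewrite -RintegralZl //; apply: le_Rintegral => //.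
- by apply: eq_integrable mD _ _ _ (integrableZl mD c If) => x _; rewrite /= EFinM.
- apply: (le_integrable mD _ _ If) => [|x Dx].
  + apply/measurable_EFinP/measurable_funM => //.
    exact/measurable_EFinP/(measurable_int mu If).
  + rewrite /comp !abse_EFin lee_fin normrM ler_piMr //; exact: (hw x Dx).2.
- by move=> x Dx; rewrite mulrC ler_wpM2l ?f0 //; exact: (hw x Dx).1.
Qed.

End finite_measure_set.
End dominated_integral.

Section integrals_on_interval.
Variable R : realType.
Local Notation leb := (@lebesgue_measure R).

Lemma lebesgue_measure_itv0 (T : R) : 0 < T -> leb `[0, T]%classic = T%:E.
Proof. by move=> T0; rewrite lebesgue_measure_itv /= lte_fin T0 oppr0 adde0. Qed.

Lemma L2_on_integrable_sqr (a b : R) (s : R -> R) : L2_on a b s ->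
  leb.-integrable `[a, b] (EFin \o (fun x => s x ^+ 2)).
Proof.
case=> ms s2oo; apply/integrableP; split.
  exact/measurable_EFinP/measurable_funX.
by under eq_integral do rewrite /comp abse_EFin ger0_norm ?sqr_ge0 //.
Qed.

Lemma norm_integ_iterated_le (T M : R) (s : R -> R) (k : R -> R -> R) :
  0 < T -> L2_on 0 T s -> (forall t tau, `|k t tau| <= M) ->
  `|integ 0 T (fun t => s t * integ 0 t (fun tau => s tau * k t tau))|
    <= M * T * integ 0 T (fun t => s t ^+ 2).
Proof.
move=> T0 L2s kM; have M0 : 0 <= M := le_trans (normr_ge0 _) (kM 0 0).
have mD : measurable (`[0, T]%classic : set (measurableTypeR R)) := measurable_itv _.
have muD := lebesgue_measure_itv0 T0.
have Is2 := L2_on_integrable_sqr L2s.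
have Iabs := @integrable_norm_of_sqr _ _ _ leb _ _ mD muD _ L2s.1 Is2.
set a := \int[leb]_(x in `[0, T]) `|s x|.
have IZabs c : leb.-integrable `[0, T]%classic (EFin \o (fun x => c * `|s x|)).
  by apply: eq_integrable mD _ _ _ (integrableZl mD c Iabs) => x _; rewrite /= EFinM.
have inner t : `[0, T]%classic t -> `|integ 0 t (fun tau => s tau * k t tau)| <= M * a.
  rewrite /= in_itv /= => /andP[t0 tT].
  have sub : (`[0, T] `&` `[0, t])%classic = `[0, t]%classic :> set R.
    apply/setIidr => x /=; rewrite !in_itv /= => /andP[x0 xt].
    by rewrite x0 (le_trans xt tT).
  rewrite /integ -sub Rintegral_mkcondr -RintegralZl //.
  apply: ler_norm_Rintegral_dom => // x _; rewrite /patch; case: ifP => _.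
    by rewrite normrM mulrC ler_wpM2r.
  by rewrite normr0 mulr_ge0.
apply: le_trans (_ : \int[leb]_(t in `[0, T]) (M * a * `|s t|) <= _).
  apply: ler_norm_Rintegral_dom => // t Dt.
  by rewrite normrM mulrC ler_wpM2r // inner.
rewrite RintegralZl // -/a -mulrA -expr2 -mulrA ler_wpM2l //.
exact: (@Rintegral_norm_sqr_le _ _ _ leb _ _ mD muD _ T0 L2s.1 Is2).
Qed.

Lemma integ_sqr_cos_ge (T w : R) (s : R -> R) : 0 < T -> L2_on 0 T s ->
  (forall x, 0 <= x <= T -> 1 / 2 <= cos (w * (x - T))) ->
  integ 0 T (fun t => s t ^+ 2) / 2 <= integ 0 T (fun t => s t ^+ 2 * cos (w * (t - T))).
Proof.
move=> T0 L2s cos_half.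
have mD : measurable (`[0, T]%classic : set (measurableTypeR R)) := measurable_itv _.
rewrite mulrC -div1r; apply: Rintegral_weight_ge (L2_on_integrable_sqr L2s) _ _ _ => //.
- apply: measurable_funTS; apply: continuous_measurable_fun => x.
  apply: continuous_comp; last exact: continuous_cos.
  by apply: cvgM; [exact: cvg_cst | apply: cvgB; [exact: cvg_id | exact: cvg_cst]].
- by move=> x _; exact: sqr_ge0.
- by move=> x; rewrite /= in_itv /= => /cos_half; rewrite cos_max.
Qed.

End integrals_on_interval.

Section kernel_bound.
Variable R : realType.

Lemma cos_ge_half_near0 : exists2 e : R, 0 < e & forall x, `|x| < e -> 1 / 2 <= cos x.
Proof.
have /cvgrPdist_lt/(_ (1 / 2)) := @continuous_cos R 0.
have half_gt0 : (0 : R) < 1 / 2 by lra.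
move=> /(_ half_gt0) /nbhs_ballP [e /= e0 He]; exists e => // x xe.
have := He x; rewrite /ball /= sub0r normrN => /(_ xe).
rewrite cos0 ltr_distlC => /andP[] *; lra.
Qed.

Lemma lam_diff_mul_le (K j : nat) : (0 < j)%N ->
  `|lam R K - lam R j| * `|lam R j - lam R 1|
    <= 2 * pi ^+ 4 * (K%:R ^+ 2 + 1) * j%:R ^+ 4.
Proof.
move=> j0; rewrite /lam !exprMn expr1n mul1r.
rewrite -[4%N]/(2 + 2)%N !exprD.
have k2 : (0 : R) <= K%:R ^+ 2 by exact: sqr_ge0.
have x2 : (1 : R) <= j%:R ^+ 2 by rewrite expr_ge1 // ler1n.
have P0 : (0 : R) < pi ^+ 2 by rewrite exprn_gt0 // pi_gt0.
move: k2 x2 P0; set k := K%:R ^+ 2; set x := j%:R ^+ 2; set P := pi ^+ 2 => k2 x2 P0.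
have h1 : `|k * P - x * P| <= P * (k + 1) * x.
  have : k <= k * x by rewrite ler_peMr.
  rewrite ler_norml => ?; apply/andP; split; nra.
have h2 : `|x * P - P| <= 2 * P * x by rewrite ler_norml; apply/andP; split; nra.
apply: le_trans (ler_pM _ _ h1 h2) _ => //.
by rewrite [leLHS](_ : _ = 2 * (P * P) * (k + 1) * (x * x)) //; ring.
Qed.

Lemma rseries_seriesE (F : nat -> R) :
  (fun N => \sum_(1 <= j < N) F j) = series (fun j => if (0 < j)%N then F j else 0).
Proof.
apply/funext => -[|N]; rewrite /series /=; first by rewrite !big_geq.
by rewrite [RHS]big_nat_recl //= add0r big_add1.
Qed.

Lemma ler_norm_rseries (F v : nat -> R) (C : R) :
  0 <= C -> (forall j, 0 <= v j) -> (forall j, (0 < j)%N -> `|F j| <= C * v j) ->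
  (\sum_(1 <= j <oo) (v j)%:E < +oo)%E ->
  `|rseries F| <= C * fine (\sum_(1 <= j <oo) (v j)%:E)%E.
Proof.
move=> C0 v0 Fv vfin.
set S := (\sum_(1 <= j <oo) (v j)%:E)%E in vfin *.
have Sf : S \is a fin_num by rewrite ge0_fin_numE // nneseries_ge0 // => *; rewrite lee_fin.
have psum N : \sum_(1 <= j < N) v j <= fine S.
  by rewrite -lee_fin fineK // -sumEFin; apply: nneseries_lim_ge => *; rewrite lee_fin.
rewrite /rseries rseries_seriesE; set G := fun j => _.
have normG N : [normed series G] N <= C * fine S.
  have -> : [normed series G] N = \sum_(1 <= j < N) `|F j|.
    rewrite (congr1 (fun u => u N) (rseries_seriesE (fun j => `|F j|))) /series /=.
    by apply: eq_bigr => j _; rewrite /G; case: ifP; rewrite ?normr0.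
  apply: le_trans (_ : \sum_(1 <= j < N) C * v j <= _).
    by apply: ler_sum_nat => j /andP[j1 _]; exact: Fv.
  by rewrite -mulr_sumr ler_wpM2l // psum.
have cvg_normG : cvgn [normed series G].
  apply: nondecreasing_is_cvgn; first by apply: nondecreasing_series => *; exact: normr_ge0.
  by exists (C * fine S) => _ [N _ <-]; exact: normG.
apply: le_trans (lim_series_norm cvg_normG) _.
by apply: limr_le => //; apply: nearW => N; exact: normG.
Qed.

Lemma norm_kn_le (K n : nat) (mu : R -> R) (T t tau : R) :
  (\sum_(1 <= j <oo) (((j ^ (4 * n))%:R * `|cc mu K j|)%:E) < +oo)%E ->
  `|kn mu K n T t tau| <= (2 * pi ^+ 4 * (K%:R ^+ 2 + 1)) ^+ n *
     fine (\sum_(1 <= j <oo) (((j ^ (4 * n))%:R * `|cc mu K j|)%:E))%E.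
Proof.
move=> ccfin; rewrite /kn normrM normrX normrN1 expr1n mul1r.
have c0 : (0 : R) <= 2 * pi ^+ 4 * (K%:R ^+ 2 + 1).
  by apply/mulr_ge0/addr_ge0/ler01/sqr_ge0; apply/mulr_ge0/exprn_ge0/pi_ge0.
apply: ler_norm_rseries => // [|j j0]; first exact: exprn_ge0.
move: (cc mu K j) (sin_max (lam R K * (t - T) + lam R j * (tau - t) + lam R 1 * (T - tau))).
move=> c /(ler_piMr _) sin_le; rewrite normrM (le_trans (sin_le _ (normr_ge0 _))) //.
rewrite !normrM !normrX -exprMn natrX exprM mulrA -exprMn ler_wpM2r //.
by rewrite lerXn2r ?nnegrE ?(mulr_ge0 c0) ?exprn_ge0 ?mulr_ge0 ?lam_diff_mul_le.
Qed.

End kernel_bound.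

Lemma ler_sg_form (F : realFieldType) (A I J b e : F) :
  A != 0 -> 0 <= b -> b / 2 <= I -> `|J| <= e * b -> e <= `|A| / 4 ->
  `|A| / 4 * b <= - Num.sg A * (- A * I + J).
Proof.
move=> A0 b0 bI Jb eA.
have sgJ : `|Num.sg A * J| <= `|J| by rewrite normrM normr_sg A0 mul1r.
have AI : `|A| * (b / 2) <= `|A| * I by rewrite ler_wpM2l.
have eb : e * b <= `|A| / 4 * b by rewrite ler_wpM2r.
rewrite mulrDr !mulNr mulrN opprK mulrA -normrEsg.
have := ler_norm (Num.sg A * J); lra.
Qed.

Theorem lemma5p2 (R : realType) (K n : nat) (mu : R -> R) :
  (0 < K)%N -> (0 < n)%N ->
  H3_01 mu ->
  (\sum_(1 <= j <oo) (((j ^ (4 * n))%:R * `|cc mu K j|)%:E) < +oo)%E ->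
  AnK mu K n != 0 ->
  exists Tstar : R, 0 < Tstar /\
    forall T : R, 0 < T -> T < Tstar ->
    forall s : R -> R, L2_on 0 T s ->
      - Num.sg (AnK mu K n) * Qn mu K n T s
        >= `|AnK mu K n| / 4 * integ 0 T (fun t => s t ^+ 2).
Proof.
move=> _ _ _ ccfin A0; set A := AnK mu K n in A0 *.
have knM T t tau := norm_kn_le T t tau ccfin.
set M := _ * fine _ in knM; have M0 : 0 <= M := le_trans (normr_ge0 _) (knM 0 0 0).
have [e e0 cos_half] := @cos_ge_half_near0 R.
set w := lam R K - lam R 1; pose L := `|w| + 1.
have wL : `|w| <= L by rewrite lerDl.
have L0 : 0 < L by rewrite ltr_pwDr.
have A_gt0 : 0 < `|A| by rewrite normr_gt0.
exists (Num.min (e / L) (`|A| / (4 * (M + 1)))).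
have M1 : 0 < 4 * (M + 1) by rewrite mulr_gt0 ?ltr_pwDr.
split=> [|T T0]; first by rewrite lt_min !divr_gt0.
rewrite lt_min !ltr_pdivlMr // => /andP[TL TA] s L2s.
apply: (ler_sg_form (e := M * T)) A0 _ _ _ _.
- by apply: Rintegral_ge0 => x _; exact: sqr_ge0.
- apply: integ_sqr_cos_ge T0 L2s _ => x /andP[x0 xT]; apply: cos_half.
  have xTT : `|x - T| <= T by rewrite ler_norml; apply/andP; split; lra.
  by rewrite normrM (le_lt_trans (ler_pM (normr_ge0 _) (normr_ge0 _) wL xTT)) // mulrC.
- exact: norm_integ_iterated_le (knM T).
- by rewrite ler_pdivlMr //; lra.
Qed.
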